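(* Let $\mathcal G$ be a braided stability groupoid and let $V\colon U\mathcal G\to\mathcal D$ be a functor, where $\mathcal D=\mathrm{Set}$ or $\mathcal D=R\text{-Mod}$ for a ring $R$. Then $V$ is generated in ranks $\le d$ if and only if the map $(\Sigma V)_n\to V_n$ induced by $\iota_1\in\mathrm{Hom}(0,1)$ is surjective for all $n>d$.
   Context: Stability groupoid: monoidal groupoid $(\mathcal G,\oplus,0)$ with objects $(\mathbb N,+,0)$, $G_n=\mathrm{Aut}(n)$, $\oplus\colon G_m\times G_n\to G_{m+n}$ injective, $G_0$ trivial, $(G_{l+m}\times1)\cap(1\times G_{m+n})=1\times G_m\times1$; braided: with braiding $b_{m,n}\in G_{m+n}$. $U\mathcal G$: objects $\mathbb N$, $\mathrm{Hom}(m,n)=G_n/G_{n-m}$ for $m\le n$ ($G_{n-m}\subset G_n$ via $g\mapsto g\oplus\mathrm{id}_m$), empty otherwise, composition $fG_l\circ gG_m=f(\mathrm{id}_l\oplus g)G_{l+m}$, monoidal via $f_1G_{m_1}\oplus f_2G_{m_2}=(f_1\oplus f_2)(\mathrm{id}_{m_1}\oplus b^{-1}_{n_1,m_2}\oplus\mathrm{id}_{n_2})G_{m_1+m_2}$; $0$ initial, $\iota_n\colon0\to n$. $V_n=V(n)$. $\Sigma$ is the left adjoint of $V\mapsto V(-\oplus1)$; concretely $(\Sigma V)_n\cong G_n\times_{G_{n-1}}V_{n-1}$ (sets) or $RG_n\otimes_{RG_{n-1}}V_{n-1}$ (modules), $G_{n-1}\subset G_n$ via $g\mapsto g\oplus\mathrm{id}_1$,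 and the map induced by $\iota_1$ is $[g,x]\mapsto g\cdot V(\mathrm{id}_{n-1}\oplus\iota_1)(x)$ (resp. $g\otimes x\mapsto g\cdot V(\mathrm{id}_{n-1}\oplus\iota_1)(x)$). A $U\mathcal G$-set (resp. module) $V$ is generated in ranks $\le m$ if there is an epimorphism onto $V$ from a disjoint union $\coprod_j\mathrm{Hom}(m_j,-)$ (resp. a direct sum $\bigoplus_jR\mathrm{Hom}(m_j,-)$) with all $m_j\le m$. *)

From HB Require Import structures.
From mathcomp Require Import all_boot all_algebra.
Set Implicit Arguments. Unset Strict Implicit. Unset Printing Implicit Defensive.
Import GRing.Theory.
Local Open Scope ring_scope.

Definition castN (F : nat -> Type) (m n : nat) (e : m = n) (x : F m) : F n :=
  @eq_rect nat m F x n e.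
Arguments castN F {m n} e x.

Lemma hexagon1_eq (l m n : nat) : (m + (l + n) = l + m + n)%N.
Proof. by rewrite addnCA addnA. Qed.

(* Braided stability groupoid: a strict monoidal groupoid with objects       *)
(* (N,+,0), automorphism groups G n = Aut(n), monoidal product              *)
(* oplus : G m x G n -> G (m+n) (a group homomorphism, strictly associative  *)
(* and unital up to the identification of ranks), injective, G 0 trivial,   *)
(* the intersection axiom, and a braiding b m n in G (m+n) (natural,        *)
(* satisfying both hexagon axioms).  Composition g o h is written g * h.    *)
Record braided_stability_groupoid := BSG {
  G : nat -> Type;
  gmul : forall n, G n -> G n -> G n;
  gone : forall n, G n;
  ginv : forall n, G n -> G n;
  gmulA : forall n (x y z : G n), gmul x (gmul y z) = gmul (gmul x y) z;
  gmul1g : forall n (x : G n), gmul (gone n) x = x;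
  gmulVg : forall n (x : G n), gmul (ginv x) x = gone n;
  oplus : forall m n, G m -> G n -> G (m + n);
  oplus_morph : forall m n (g1 g2 : G m) (h1 h2 : G n),
      oplus (gmul g1 g2) (gmul h1 h2) = gmul (oplus g1 h1) (oplus g2 h2);
  oplus_inj : forall m n (g g' : G m) (h h' : G n),
      oplus g h = oplus g' h' -> g = g' /\ h = h';
  oplus_assoc : forall l m n (a : G l) (b : G m) (c : G n),
      oplus (oplus a b) c = castN G (addnA l m n) (oplus a (oplus b c));
  oplus_unitl : forall n (g : G 0) (h : G n),
      oplus g h = castN G (esym (add0n n)) h;
  oplus_unitr : forall n (h : G n) (g : G 0),
      oplus h g = castN G (esym (addn0 n)) h;
  G0_trivial : forall g : G 0, g = gone 0;
  (* (G_{l+m} x 1) \cap (1 x G_{m+n}) = 1 x G_m x 1 inside G_{l+m+n} *)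
  oplus_inter : forall l m n (a : G (l + m)) (b : G (m + n)),
      oplus a (gone n) = castN G (addnA l m n) (oplus (gone l) b) ->
      exists c : G m, a = oplus (gone l) c /\ b = oplus c (gone n);
  braid : forall m n, G (m + n);
  braid_nat : forall m n (g : G m) (h : G n),
      gmul (braid m n) (oplus g h) =
      gmul (castN G (addnC n m) (oplus h g)) (braid m n);
  braid_hex1 : forall l m n,
      castN G (addnA l m n) (braid l (m + n)) =
      gmul (castN G (hexagon1_eq l m n) (oplus (gone m) (braid l n)))
           (oplus (braid l m) (gone n));
  braid_hex2 : forall l m n,
      braid (l + m) n =
      gmul (castN G (addnAC l n m) (oplus (braid l n) (gone m)))
           (castN G (addnA l m n) (oplus (gone l) (braid m n)))
}.

Arguments gmul {_ _}. Arguments ginv {_ _}. Arguments oplus {_ _ _}.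

Section UG.
Variable S : braided_stability_groupoid.

(* The category UG.  A morphism m -> n (m <= n) is a coset g G_{n-m} with    *)
(* g in G_n, where G_{n-m} sits in G_n via h |-> h (+) id_m.  We represent   *)
(* it by a representative: k = n - m (with k + m = n) and g : G n.           *)
Record hom (m n : nat) := Hom { hom_k : nat; hom_kE : (hom_k + m = n)%N; hom_g : G S n }.

(* Two representatives define the same morphism: g' in g G_{n-m}. *)
Definition hom_eqv m n (f f' : hom m n) : Prop :=
  exists h : G S (hom_k f),
    hom_g f' = gmul (hom_g f) (castN (G S) (hom_kE f) (oplus h (gone S m))).

Lemma hom_comp_eq (k1 k2 m n p : nat) (e1 : (k1 + n = p)%N) (e2 : (k2 + m = n)%N) :
  (k1 + k2 + m = p)%N.
Proof. by rewrite -addnA e2. Qed.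

Definition hom_comp m n p (f : hom n p) (g : hom m n) : hom m p :=
  Hom (hom_comp_eq (hom_kE f) (hom_kE g))
      (gmul (hom_g f) (castN (G S) (hom_kE f) (oplus (gone S (hom_k f)) (hom_g g)))).

Definition hom_id n : hom n n := Hom (add0n n) (gone S n).

Definition hom_aut n (g : G S n) : hom n n := Hom (add0n n) g.

Definition hom_iota n : hom 0 n := Hom (addn0 n) (gone S n).

Lemma hom_oplus_eq (k1 a1 b1 k2 a2 b2 : nat)
  (e1 : (k1 + a1 = b1)%N) (e2 : (k2 + a2 = b2)%N) :
  (k1 + (a1 + k2) + a2 = b1 + b2)%N.
Proof. by rewrite -e1 -e2 !addnA. Qed.

Lemma hom_oplus_keq (k1 a1 b1 k2 a2 b2 : nat)
  (e1 : (k1 + a1 = b1)%N) (e2 : (k2 + a2 = b2)%N) :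
  (k1 + k2 + (a1 + a2) = b1 + b2)%N.
Proof. by rewrite -e1 -e2 addnACA. Qed.

Definition hom_oplus a1 b1 a2 b2 (f1 : hom a1 b1) (f2 : hom a2 b2) :
    hom (a1 + a2) (b1 + b2) :=
  Hom (hom_oplus_keq (hom_kE f1) (hom_kE f2))
      (gmul (oplus (hom_g f1) (hom_g f2))
            (castN (G S) (hom_oplus_eq (hom_kE f1) (hom_kE f2))
               (oplus (oplus (gone S (hom_k f1)) (ginv (braid S a1 (hom_k f2))))
                      (gone S a2)))).

(* Functors UG -> Set.  A functor is given on representatives and must be   *)
(* constant on cosets (i.e. well defined on morphisms of UG).               *)
Record UG_set_functor := UGSetFunctor {
  Vobj : nat -> Type;
  Vmap : forall m n, hom m n -> Vobj m -> Vobj n;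
  Vmap_wd : forall m n (f f' : hom m n), hom_eqv f f' -> forall x, Vmap f x = Vmap f' x;
  Vmap_id : forall n x, Vmap (hom_id n) x = x;
  Vmap_comp : forall m n p (f : hom n p) (g : hom m n) x,
      Vmap (hom_comp f g) x = Vmap f (Vmap g x)
}.

Record UG_mod_functor (R : pzRingType) := UGModFunctor {
  Mobj : nat -> lmodType R;
  Mmap : forall m n, hom m n -> Mobj m -> Mobj n;
  Mmap_linear : forall m n (f : hom m n) (a : R) (x y : Mobj m),
      Mmap f (a *: x + y) = a *: Mmap f x + Mmap f y;
  Mmap_wd : forall m n (f f' : hom m n), hom_eqv f f' -> forall x, Mmap f x = Mmap f' x;
  Mmap_id : forall n x, Mmap (hom_id n) x = x;
  Mmap_comp : forall m n p (f : hom n p) (g : hom m n) x,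
      Mmap (hom_comp f g) x = Mmap f (Mmap g x)
}.

(* Set case: an epimorphism  eta : coprod_{j in J} Hom(m_j,-) => V  with all *)
(* m_j <= d: eta_n is defined on the coproduct sum_j Hom(m_j,n), well        *)
(* defined on morphisms of UG, natural, and surjective in each rank.        *)
Definition generated_set (V : UG_set_functor) (d : nat) : Prop :=
  exists (J : Type) (mj : J -> nat), (forall j, mj j <= d)%N /\
  exists eta : forall n, {j : J & hom (mj j) n} -> Vobj V n,
    (forall n j (g g' : hom (mj j) n), hom_eqv g g' ->
        eta n (existT _ j g) = eta n (existT _ j g')) /\
    (forall n p (f : hom n p) j (g : hom (mj j) n),
        eta p (existT _ j (hom_comp f g)) = Vmap f (eta n (existT _ j g))) /\
    (forall n (v : Vobj V n), exists t, eta n t = v).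

(* Module case: an epimorphism  bigoplus_j R Hom(m_j,-) => V  with m_j <= d. *)
(* An R-linear map out of the free module R[X] is the linear extension of a *)
(* function on the basis X; it is natural iff it is natural on the basis,   *)
(* and it is surjective iff every element is an R-linear combination of     *)
(* images of basis elements.                                                 *)
Definition generated_mod (R : pzRingType) (V : UG_mod_functor R) (d : nat) : Prop :=
  exists (J : Type) (mj : J -> nat), (forall j, mj j <= d)%N /\
  exists eta : forall n, {j : J & hom (mj j) n} -> Mobj V n,
    (forall n j (g g' : hom (mj j) n), hom_eqv g g' ->
        eta n (existT _ j g) = eta n (existT _ j g')) /\
    (forall n p (f : hom n p) j (g : hom (mj j) n),
        eta p (existT _ j (hom_comp f g)) = Mmap f (eta n (existT _ j g))) /\
    (forall n (v : Mobj V n), exists s : seq (R * {j : J & hom (mj j) n}),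
        v = \sum_(t <- s) t.1 *: eta n t.2).

(* (Sigma V)_{n+1} = G_{n+1} x_{G_n} V_n (resp. R G_{n+1} (x)_{R G_n} V_n);  *)
(* the map is [g,x] |-> g . V(id_n (+) iota_1)(x).  Here id_n (+) iota_1 :  *)
(* n + 0 -> n + 1, and n + 0 is identified with n.                          *)
Definition sigma_set_map (V : UG_set_functor) (n : nat) (g : G S (n + 1)) (x : Vobj V n) :
    Vobj V (n + 1) :=
  Vmap (hom_aut g)
    (Vmap (hom_oplus (hom_id n) (hom_iota 1)) (castN (Vobj V) (esym (addn0 n)) x)).

(* surjectivity of the map out of the quotient G_{n+1} x_{G_n} V_n *)
Definition sigma_set_surj (V : UG_set_functor) (n : nat) : Prop :=
  forall v : Vobj V (n + 1), exists (g : G S (n + 1)) (x : Vobj V n), sigma_set_map g x = v.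

Definition sigma_mod_map (R : pzRingType) (V : UG_mod_functor R) (n : nat)
    (g : G S (n + 1)) (x : Mobj V n) : Mobj V (n + 1) :=
  Mmap (hom_aut g)
    (Mmap (hom_oplus (hom_id n) (hom_iota 1))
          (castN (fun k => (Mobj V k : Type)) (esym (addn0 n)) x)).

(* surjectivity of the R-linear map out of R G_{n+1} (x)_{R G_n} V_n, which is
   spanned by the elementary tensors g (x) x *)
Definition sigma_mod_surj (R : pzRingType) (V : UG_mod_functor R) (n : nat) : Prop :=
  forall v : Mobj V (n + 1), exists s : seq (R * G S (n + 1) * Mobj V n),
    v = \sum_(t <- s) t.1.1 *: sigma_mod_map t.1.2 t.2.

End UG.

From Pilot Require Import Defs.
From HB Require Import structures.
From mathcomp Require Import all_boot all_algebra.
Set Implicit Arguments. Unset Strict Implicit. Unset Printing Implicit Defensive.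

(* Hom(m, n + 1) is a single G_{n+1}-orbit, so for m <= n every morphism
   m -> n + 1 is, up to its coset, g o (id_n (+) iota_1) o h with g an
   automorphism and h : m -> n.  Hence everything coming from ranks
   <= d < n + 1 lies in the image of (Sigma V)_{n+1} -> V_{n+1}.
   Conversely, if these maps are onto above rank d, induction on the rank
   writes every element of V (as a linear combination, in the module case)
   as g . V(id_n (+) iota_1)(x) with x coming from rank <= d, so the
   elements of rank <= d generate V. *)

Section Cast.

Variable F : nat -> Type.

Lemma castNK a b (e : a = b) (x : F a) : castN F (esym e) (castN F e x) = x.
Proof. by case: b / e. Qed.

Lemma castN_id a (e : a = a) (x : F a) : castN F e x = x.
Proof. by rewrite (eq_irrelevance e erefl). Qed.

Lemma castN_trans a b c (e1 : a = b) (e2 : b = c) (x : F a) :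
  castN F e2 (castN F e1 x) = castN F (etrans e1 e2) x.
Proof. by case: c / e2. Qed.

End Cast.

Section Groupoid.

Variable S : braided_stability_groupoid.
Local Notation GG := (G S).
Local Notation hom := (Defs.hom S).

Lemma castN_gone a b (e : a = b) : castN GG e (gone S a) = gone S b.
Proof. by case: b / e. Qed.

Lemma gmul_idem_eq1 n (x : GG n) : gmul x x = x -> x = gone S n.
Proof. by move=> xx; rewrite -(gmulVg x) -{3}xx gmulA gmulVg gmul1g. Qed.

Lemma gmulgV n (x : GG n) : gmul x (ginv x) = gone S n.
Proof.
by apply: gmul_idem_eq1; rewrite -gmulA (gmulA (ginv x) x) gmulVg gmul1g.
Qed.

Lemma gmulg1 n (x : GG n) : gmul x (gone S n) = x.
Proof. by rewrite -(gmulVg x) gmulA gmulgV gmul1g. Qed.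

Lemma oplus11 m n : oplus (gone S m) (gone S n) = gone S (m + n).
Proof. by apply: gmul_idem_eq1; rewrite -oplus_morph !gmul1g. Qed.

Lemma castN_oplus0l n (x : GG 0) (y : GG n) : castN GG (add0n n) (oplus x y) = y.
Proof. by rewrite oplus_unitl castN_trans castN_id. Qed.

Lemma castN_hom m a b (e : a = b) (F : nat -> Type)
    (map : forall n p, hom n p -> F n -> F p) (h : hom m a) (x : F m) :
  castN F e (map _ _ h x) = map _ _ (castN (hom m) e h) x.
Proof. by case: b / e. Qed.

Definition hom_stab n : hom (n + 0) (n + 1) := hom_oplus (hom_id S n) (hom_iota S 1).

Lemma hom_factor_stab m n (g : hom m (n + 1)) : (m <= n)%N ->
  exists (a : GG (n + 1)) (h : hom m (n + 0)),
    hom_eqv g (hom_comp (hom_aut a) (hom_comp (hom_stab n) h)).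
Proof.
move=> le_mn; have ek : (n - m + m = n + 0)%N by rewrite addn0 subnK.
exists (gmul (hom_g g) (ginv (hom_g (hom_stab n)))), (Defs.Hom ek (gone S (n + 0))).
exists (gone S (hom_k g)).
by rewrite /= !oplus11 !castN_gone !gmulg1 castN_oplus0l -gmulA gmulVg gmulg1.
Qed.

Section Action.

Variables (F : nat -> Type) (map : forall m n, hom m n -> F m -> F n).
Hypothesis map_id : forall n x, map (hom_id S n) x = x.
Hypothesis map_comp : forall m n p (f : hom n p) (g : hom m n) x,
  map (hom_comp f g) x = map f (map g x).

Definition sigma_act n (a : GG (n + 1)) (x : F n) : F (n + 1) :=
  map (hom_aut a) (map (hom_stab n) (castN F (esym (addn0 n)) x)).

Lemma sigma_act_covers_rep m (e : forall n, hom m n -> F n)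
    (e_wd : forall n (f f' : hom m n), hom_eqv f f' -> e n f = e n f')
    (e_nat : forall n p (f : hom n p) (h : hom m n),
       e p (hom_comp f h) = map f (e n h))
    n (g : hom m (n + 1)) :
  (m <= n)%N -> exists a x, sigma_act a x = e _ g.
Proof.
move=> /(hom_factor_stab g) [a [h gE]].
exists a, (castN F (addn0 n) (e _ h)).
by rewrite /sigma_act castNK -!e_nat (e_wd _ _ _ gE).
Qed.

Section LowRank.

Variable d : nat.

(* Index set of the tautological generating family: a copy of Hom(m, -) for
   each x in F m with m <= d, sent to F by Yoneda. *)
Definition low_rank_elt := {m : nat & ((m <= d)%N * F m)%type}.
Local Notation low_rank_gen n := {j : low_rank_elt & hom (projT1 j) n}.

Definition low_rank_eval n (t : low_rank_gen n) : F n :=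
  map (projT2 t) (projT2 (projT1 t)).2.

Lemma sigma_act_low_rank_eval n (a : GG (n + 1)) (t : low_rank_gen n) :
  exists t', low_rank_eval t' = sigma_act a (low_rank_eval t).
Proof.
case: t => j h; exists (existT _ j
  (hom_comp (hom_aut a) (hom_comp (hom_stab n) (castN (hom _) (esym (addn0 n)) h)))).
by rewrite /sigma_act /low_rank_eval /= !map_comp (castN_hom _ map).
Qed.

Lemma low_rank_eval_id n (le_nd : (n <= d)%N) (v : F n) :
  low_rank_eval (existT _ (existT _ n (le_nd, v)) (hom_id S n) : low_rank_gen n) = v.
Proof. exact: map_id. Qed.

Lemma low_rank_eval_surj :
  (forall n, (d < n + 1)%N -> forall v, exists a x, @sigma_act n a x = v) ->
  forall n (v : F n), exists t, @low_rank_eval n t = v.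
Proof.
move=> sigma_surj; elim/ltn_ind => n IHn v.
have [le_nd | lt_dn] := leqP n d.
  by exists (existT _ (existT _ n (le_nd, v)) (hom_id S n)); apply: low_rank_eval_id.
case: n IHn lt_dn v => [//|n] IHn; rewrite -[n.+1]addn1 => lt_dn v.
have [a [x <-]] := sigma_surj n lt_dn v.
have [t <-] := IHn n (ltnSn n) x.
exact: sigma_act_low_rank_eval.
Qed.

End LowRank.

End Action.

End Groupoid.

Section SetCase.

Variables (S : braided_stability_groupoid) (V : UG_set_functor S) (d : nat).

Lemma generated_set_sigma_surj :
  generated_set V d -> forall n, (d < n + 1)%N -> sigma_set_surj V n.
Proof.
move=> [J [mj [le_mj_d [eta [eta_wd [eta_nat eta_surj]]]]]] n lt_dn v.
have [[j g] <-] := eta_surj _ v.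
apply: (sigma_act_covers_rep (fun n => eta_wd n j) (fun n p f => eta_nat n p f j)).
by rewrite -ltnS -[n.+1]addn1 (leq_ltn_trans (le_mj_d j)).
Qed.

Lemma sigma_set_surj_generated :
  (forall n, (d < n + 1)%N -> sigma_set_surj V n) -> generated_set V d.
Proof.
move=> sigma_surj; exists (low_rank_elt (Vobj V) d), (fun j => projT1 j).
split; first by case=> m [].
exists (@low_rank_eval _ _ (@Vmap S V) d).
split; first by move=> n j g g' gg'; exact: Vmap_wd.
split; first by move=> *; exact: Vmap_comp.
by move=> n; apply: (low_rank_eval_surj (@Vmap_id S V) (@Vmap_comp S V)).
Qed.

End SetCase.

Section Span.

Import GRing.Theory.
Local Open Scope ring_scope.

Variable R : pzRingType.

Definition in_span (M : lmodType R) (I : Type) (f : I -> M) (v : M) :=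
  exists s : seq (R * I), v = \sum_(t <- s) t.1 *: f t.2.

Section Closure.

Variables (M : lmodType R) (I : Type) (f : I -> M).

Lemma in_span0 : in_span f 0.
Proof. by exists [::]; rewrite big_nil. Qed.

Lemma in_spanD u v : in_span f u -> in_span f v -> in_span f (u + v).
Proof. by move=> [s ->] [s' ->]; exists (s ++ s'); rewrite big_cat. Qed.

Lemma in_spanZ a v : in_span f v -> in_span f (a *: v).
Proof.
move=> [s ->]; exists [seq (a * t.1, t.2) | t <- s].
by rewrite big_map scaler_sumr; apply: eq_bigr => t _; rewrite scalerA.
Qed.

Lemma in_span_gen i : in_span f (f i).
Proof. by exists [:: (1, i)]; rewrite big_seq1 scale1r. Qed.

End Closure.

Lemma in_span_linear (M N : lmodType R) (I J : Type) (f : I -> M) (g : J -> N)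
    (phi : M -> N) v :
  (forall a x y, phi (a *: x + y) = a *: phi x + phi y) ->
  (forall i, in_span g (phi (f i))) -> in_span f v -> in_span g (phi v).
Proof.
move=> phi_lin span_phi_f [s ->].
have phi0 : phi 0 = 0.
  have := phi_lin 1 0 0; rewrite !scale1r addr0 => phi00.
  by apply: (addrI (phi 0)); rewrite addr0 -phi00.
elim: s => [|t s IHs]; first by rewrite big_nil phi0; exact: in_span0.
by rewrite big_cons phi_lin; apply: in_spanD => //; apply: in_spanZ.
Qed.

Lemma in_span_trans (M : lmodType R) (I J : Type) (f : I -> M) (g : J -> M) v :
  (forall i, in_span g (f i)) -> in_span f v -> in_span g v.
Proof. exact: (in_span_linear (phi := id)). Qed.

End Span.

Section ModCase.

Import GRing.Theory.
Local Open Scope ring_scope.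

Variables (S : braided_stability_groupoid) (R : pzRingType) (V : UG_mod_functor S R).

Lemma castN_linear (F : nat -> lmodType R) a b (e : a = b) r (x y : F a) :
  castN (fun k => (F k : Type)) e (r *: x + y) =
  r *: castN (fun k => (F k : Type)) e x + castN (fun k => (F k : Type)) e y.
Proof. by case: b / e. Qed.

Lemma sigma_mod_map_linear n (a : G S (n + 1)) r (x y : Mobj V n) :
  sigma_mod_map a (r *: x + y) = r *: sigma_mod_map a x + sigma_mod_map a y.
Proof. by rewrite /sigma_mod_map castN_linear !Mmap_linear. Qed.

Lemma sigma_mod_surjE n :
  sigma_mod_surj V n <->
  forall v, in_span (fun p : G S (n + 1) * Mobj V n => sigma_mod_map p.1 p.2) v.
Proof.
split=> surj v; have [s ->] := surj v.
  by exists [seq (t.1.1, (t.1.2, t.2)) | t <- s]; rewrite big_map.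
by exists [seq (t.1, t.2.1, t.2.2) | t <- s]; rewrite big_map.
Qed.

Variable d : nat.

Lemma generated_mod_sigma_surj :
  generated_mod V d -> forall n, (d < n + 1)%N -> sigma_mod_surj V n.
Proof.
move=> [J [mj [le_mj_d [eta [eta_wd [eta_nat eta_span]]]]]] n lt_dn.
apply/sigma_mod_surjE => v; apply: in_span_trans (eta_span _ v) => -[j g].
have le_mj_n : (mj j <= n)%N.
  by rewrite -ltnS -[n.+1]addn1 (leq_ltn_trans (le_mj_d j)).
have [a [x <-]] :=
  sigma_act_covers_rep (fun n => eta_wd n j) (fun n p f => eta_nat n p f j) g le_mj_n.
exact: (in_span_gen _ (a, x)).
Qed.

Lemma sigma_mod_surj_generated :
  (forall n, (d < n + 1)%N -> sigma_mod_surj V n) -> generated_mod V d.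
Proof.
move=> sigma_surj.
exists (low_rank_elt (fun k => (Mobj V k : Type)) d), (fun j => projT1 j).
split; first by case=> m [].
exists (@low_rank_eval _ _ (@Mmap S R V) d).
split; first by move=> n j g g' gg'; exact: Mmap_wd.
split; first by move=> *; exact: Mmap_comp.
elim/ltn_ind => n IHn v.
have [le_nd | lt_dn] := leqP n d.
  by rewrite -(low_rank_eval_id (@Mmap_id S R V) le_nd v); apply: in_span_gen.
case: n IHn lt_dn v => [//|n] IHn; rewrite -[n.+1]addn1 => lt_dn v.
have /sigma_mod_surjE span_v := sigma_surj n lt_dn.
apply: in_span_trans (span_v v) => -[a x] /=.
apply: in_span_linear (sigma_mod_map_linear a) _ (IHn n (ltnSn n) x) => t.
have [t' t'E] := sigma_act_low_rank_eval (@Mmap_comp S R V) a t.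
by rewrite /sigma_mod_map -/(sigma_act _ a _) -t'E; apply: in_span_gen.
Qed.

End ModCase.

Theorem proposition5p4 (S : braided_stability_groupoid) (d : nat) :
  (forall V : UG_set_functor S,
     generated_set V d <-> (forall n : nat, (d < n + 1)%N -> sigma_set_surj V n)) /\
  (forall (R : pzRingType) (V : UG_mod_functor S R),
     generated_mod V d <-> (forall n : nat, (d < n + 1)%N -> sigma_mod_surj V n)).
Proof.
split=> [V | R V]; split.
- exact: generated_set_sigma_surj.
- exact: sigma_set_surj_generated.
- exact: generated_mod_sigma_surj.
- exact: sigma_mod_surj_generated.
Qed.
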